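(* Let $P=\{x\in\mathbb R^3:(a^i)^\intercal x\le b_i,\ 1\le i\le n\}$ be a 3-dimensional polytope centrally symmetric with respect to the origin, where $b_i>0$ and each inequality defines a facet $F_i$ with supporting hyperplane $H_i=\{x:(a^i)^\intercal x=b_i\}$. For indices $i_1,\dots,i_6$ let $A_{i_1,\dots,i_6}\in\mathbb R^{6\times 9}$ be the matrix with rows $((a^{i_1})^\intercal,0,0)$, $(0,(a^{i_2})^\intercal,0)$, $(0,0,(a^{i_3})^\intercal)$, $(0,(a^{i_4})^\intercal,-(a^{i_4})^\intercal)$, $(-(a^{i_5})^\intercal,0,(a^{i_5})^\intercal)$, $((a^{i_6})^\intercal,-(a^{i_6})^\intercal,0)$, and let $\mathcal S$ be the set of matrices $W=(w^1,w^2,w^3)\in\mathbb R^{3\times3}$ with $A_{i_1,\dots,i_6}(w^1;w^2;w^3)=(b_{i_1},\dots,b_{i_6})^\intercal$. If $\mathrm{rank}(A_{i_1,\dots,i_6})<6$, then the function $f(W)=|\det W|$ on $\mathcal S$ has no local minimum $W\in\mathcal S$ with $f(W)>0$. *)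

From HB Require Import structures.
From mathcomp Require Import all_boot all_order all_algebra.
From mathcomp Require Import reals.
Set Implicit Arguments. Unset Strict Implicit. Unset Printing Implicit Defensive.
Import Order.TTheory GRing.Theory Num.Theory.
Local Open Scope ring_scope.

Section Defs.
Variable R : realType.

Definition dot3 (u v : 'rV[R]_3) : R := (u *m v^T) 0 0.

Definition Hpolyhedron (n : nat) (a : 'I_n -> 'rV[R]_3) (b : 'I_n -> R) (x : 'rV[R]_3) : Prop :=
  forall i, dot3 (a i) x <= b i.

(* S has affine dimension >= k : it contains k+1 affinely independent points *)
Definition aff_dim_ge (S : 'rV[R]_3 -> Prop) (k : nat) : Prop :=
  exists p : 'I_k.+1 -> 'rV[R]_3,
    (forall j, S (p j)) /\ row_free (\matrix_(j < k) (p (lift ord0 j) - p ord0)).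

Definition bounded3 (S : 'rV[R]_3 -> Prop) : Prop :=
  exists M : R, forall x, S x -> forall j, `|x 0 j| <= M.

Definition centrally_symmetric (S : 'rV[R]_3 -> Prop) : Prop :=
  forall x, S x -> S (- x).

Definition faceP n (a : 'I_n -> 'rV[R]_3) (b : 'I_n -> R) (i : 'I_n) (x : 'rV[R]_3) : Prop :=
  Hpolyhedron a b x /\ dot3 (a i) x = b i.

(* F_i is a facet of the 3-dimensional polytope P: it has dimension 2
   (it lies in the hyperplane H_i, so dimension >= 2 means dimension = 2) *)
Definition is_facet n (a : 'I_n -> 'rV[R]_3) (b : 'I_n -> R) (i : 'I_n) : Prop :=
  aff_dim_ge (faceP a b i) 2.

(* rows of A_{i1,...,i6}; idx r is i_{r+1} *)
Definition Arow n (a : 'I_n -> 'rV[R]_3) (idx : 'I_6 -> 'I_n) (r : 'I_6)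
    : 'rV[R]_(3 + 3 + 3) :=
  let v := a (idx r) in
  match val r with
  | 0 => row_mx (row_mx v 0) 0
  | 1 => row_mx (row_mx 0 v) 0
  | 2 => row_mx (row_mx 0 0) v
  | 3 => row_mx (row_mx 0 v) (- v)
  | 4 => row_mx (row_mx (- v) 0) v
  | _ => row_mx (row_mx v (- v)) 0
  end.

Definition Amat n (a : 'I_n -> 'rV[R]_3) (idx : 'I_6 -> 'I_n) : 'M[R]_(6, 3 + 3 + 3) :=
  \matrix_(r < 6) Arow a idx r.

Definition vecW (W : 'M[R]_3) : 'cV[R]_(3 + 3 + 3) :=
  col_mx (col_mx (col (inord 0) W) (col (inord 1) W)) (col (inord 2) W).

Definition inS n (a : 'I_n -> 'rV[R]_3) (b : 'I_n -> R) (idx : 'I_6 -> 'I_n) (W : 'M[R]_3) : Prop :=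
  Amat a idx *m vecW W = \col_(r < 6) b (idx r).

(* W is a local minimum of f on the set S (Euclidean topology on R^{3x3},
   expressed with the equivalent max-norm balls) *)
Definition local_min_on (S : 'M[R]_3 -> Prop) (f : 'M[R]_3 -> R) (W : 'M[R]_3) : Prop :=
  S W /\ exists eps : R, 0 < eps /\
    forall W', S W' -> (forall p q, `|W' p q - W p q| < eps) -> f W <= f W'.

End Defs.

From HB Require Import structures.
From mathcomp Require Import all_boot all_order all_algebra.
From mathcomp Require Import reals.
From mathcomp Require Import ring lra.
Set Implicit Arguments.
Unset Strict Implicit.
Unset Printing Implicit Defensive.
Import Order.TTheory GRing.Theory Num.Theory.
Local Open Scope ring_scope.

(* Since rank A < 6, the linear map S |-> A vec(W S) on the 6-dimensional
   space of symmetric 3x3 matrices kills some S <> 0, so the whole line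
   W + t W S stays in the feasible set.  Along it
     det (W + t W S) det (W - t W S) = (det W)^2 det (1 - t^2 S^2)
                                     = (det W)^2 (1 - tr (S^2) t^2 + O(t^4)),
   and tr (S^2) is the squared Frobenius norm of S, hence positive: for small
   t one of |det (W +- t W S)| is below |det W| when det W <> 0. *)

Lemma det_mx33 (R : comNzRingType) (f : nat -> nat -> R) :
  \det (\matrix_(i < 3, j < 3) f i j) =
    f 0 0 * (f 1 1 * f 2 2 - f 1 2 * f 2 1)
  - f 0 1 * (f 1 0 * f 2 2 - f 1 2 * f 2 0)
  + f 0 2 * (f 1 0 * f 2 1 - f 1 1 * f 2 0).
Proof.
rewrite (expand_det_row _ 0) !big_ord_recl big_ord0 /cofactor /=.
rewrite !(expand_det_row _ 0) !big_ord_recl !big_ord0 /cofactor !det_mx11 !mxE.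
by rewrite /bump /=; ring.
Qed.

Lemma mxtrace_mx33 (R : comNzRingType) (f : nat -> nat -> R) :
  \tr (\matrix_(i < 3, j < 3) f i j) = f 0 0 + f 1 1 + f 2 2.
Proof. by rewrite /mxtrace !big_ord_recl big_ord0 !mxE /= addr0 addrA. Qed.

Lemma det_1_subZ_mx33 (R : numFieldType) (M : 'M[R]_3) (u : R) :
  \det (1%:M - u *: M) =
    1 - \tr M * u + ((\tr M) ^+ 2 - \tr (M *m M)) / 2 * u ^+ 2 - \det M * u ^+ 3.
Proof.
pose f (i j : nat) := M (inord i) (inord j).
have -> : M = \matrix_(i < 3, j < 3) f i j.
  by apply/matrixP => i j; rewrite mxE /f !inord_val.
have -> : 1%:M - u *: \matrix_(i < 3, j < 3) f i j =
          \matrix_(i < 3, j < 3) ((i == j :> nat)%:R - u * f i j).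
  by apply/matrixP => i j; rewrite !mxE.
have -> : (\matrix_(i < 3, j < 3) f i j) *m (\matrix_(i < 3, j < 3) f i j) =
          \matrix_(i < 3, j < 3)
            (f i 0%N * f 0%N j + f i 1%N * f 1%N j + f i 2%N * f 2%N j).
  by apply/matrixP => i j; rewrite !mxE !big_ord_recl big_ord0 !mxE /= addr0 addrA.
rewrite (@det_mx33 _ (fun i j => (i == j)%:R - u * f i j)) det_mx33.
rewrite (@mxtrace_mx33 _ (fun i j => f i 0%N * f 0%N j + f i 1%N * f 1%N j
                                     + f i 2%N * f 2%N j)) mxtrace_mx33 /=.
by clearbody f; field.
Qed.

Lemma det_addZ_mul_det_subZ (R : comNzRingType) n (W S : 'M[R]_n) (t : R) :
  \det (W + t *: (W *m S)) * \det (W - t *: (W *m S)) =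
  \det W ^+ 2 * \det (1%:M - t ^+ 2 *: (S *m S)).
Proof.
have factorD : W + t *: (W *m S) = W *m (1%:M + t *: S).
  by rewrite mulmxDr mulmx1 scalemxAr.
have factorB : W - t *: (W *m S) = W *m (1%:M - t *: S).
  by rewrite mulmxBr mulmx1 scalemxAr.
rewrite factorD factorB !det_mulmx mulrACA -expr2 -det_mulmx.
rewrite mulmxBr mulmx1 mulmxDl mul1mx opprD addrA addrK.
by rewrite -scalemxAl -scalemxAr scalerA -expr2.
Qed.

Lemma mxtrace_sqr_sym_gt0 (R : realFieldType) n (S : 'M[R]_n) :
  S^T = S -> S != 0 -> 0 < \tr (S *m S).
Proof.
move=> symS S_neq0.
have -> : \tr (S *m S) = \sum_i \sum_j S i j ^+ 2.
  apply: eq_bigr => i _; rewrite mxE; apply: eq_bigr => j _.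
  by rewrite expr2 -[in S j i]symS mxE.
have row_ge0 i : 0 <= \sum_j S i j ^+ 2 by apply: sumr_ge0 => j _; exact: sqr_ge0.
rewrite lt_def sumr_ge0 // andbT; apply: contra S_neq0 => /eqP sum0.
apply/eqP/matrixP => i j; rewrite mxE; apply/eqP; rewrite -sqrf_eq0; apply/eqP.
have row0 : \sum_j S i j ^+ 2 = 0 := psumr_eq0P (fun k _ => row_ge0 k) sum0 isT.
exact: (psumr_eq0P (fun k _ => sqr_ge0 (S i k)) row0 (i := j) isT).
Qed.

Lemma exists_entrywise_small (R : realFieldType) m n (D : 'M[R]_(m, n)) (eps : R) :
  0 < eps -> exists2 e, 0 < e & forall t, `|t| < e -> forall i j, `|t * D i j| < eps.
Proof.
move=> eps_gt0; pose K := Num.max 1 (\big[Num.max/0]_(k : 'I_m * 'I_n) `|D k.1 k.2|).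
have K_gt0 : 0 < K by rewrite lt_max ltr01.
exists (eps / K) => [|t lt_t i j]; first by rewrite divr_gt0.
have le_DK : `|D i j| <= K.
  by rewrite le_max; apply/orP; right; exact: (le_bigmax _ _ (i, j)).
rewrite normrM; apply: (le_lt_trans (ler_wpM2l (normr_ge0 t) le_DK)).
by rewrite -ltr_pdivlMr.
Qed.

Lemma exists_even_sextic_lt1 (R : realFieldType) (N B C e : R) :
  0 < N -> 0 < e ->
  exists2 t, 0 < t < e & `|1 - N * t ^+ 2 + B * t ^+ 4 - C * t ^+ 6| < 1.
Proof.
move=> N_gt0 e_gt0; pose K := 2 + N + `|B| + `|C|; pose m := Num.min N 1.
have K_ge2 : 2 <= K by rewrite /K; have := normr_ge0 B; have := normr_ge0 C; lra.
have m_gt0 : 0 < m by rewrite lt_min N_gt0 ltr01.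
have [mN m1] : m <= N /\ m <= 1 by split; rewrite ge_min lexx ?orbT.
(* [t K <= min N 1] makes the terms of degree 4 and 6 at most half of [N t^2]. *)
pose t := Num.min (e / 2) (m / K).
have t_gt0 : 0 < t by rewrite lt_min !divr_gt0 //; lra.
have te : t < e by rewrite gt_min ltr_pdivrMr; lra.
have tK : t * K <= m by rewrite -ler_pdivlMr ?ge_min ?lexx ?orbT //; lra.
exists t; first by rewrite t_gt0.
have t_half : t <= 1 / 2 by nra.
rewrite (exprM t 2 2) (exprM t 2 3); set s := t ^+ 2.
have s_gt0 : 0 < s by rewrite exprn_gt0.
have sK : s * K <= m / 2 by rewrite /s expr2 -mulrA; nra.
clearbody s.
have s_le1 : s <= 1 by nra.
have BC_K : `|B| + `|C| <= K by rewrite /K; lra.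
have N_K : N <= K by rewrite /K; have := normr_ge0 B; have := normr_ge0 C; lra.
have BC_le : (`|B| + `|C|) * s ^+ 2 <= s * (m / 2) by rewrite expr2; nra.
have Ns : N * s <= m / 2 by apply: le_trans sK; nra.
have BC_norm : `|B * s ^+ 2 - C * s ^+ 3| <= (`|B| + `|C|) * s ^+ 2.
  apply: le_trans (ler_normB _ _) _.
  rewrite [`|B * _|]normrM [`|C * _|]normrM !normrX (gtr0_norm s_gt0).
  rewrite mulrDl lerD2l ler_wpM2l ?normr_ge0 // exprS.
  exact: ler_piMl (exprn_ge0 2 (ltW s_gt0)) s_le1.
move: BC_norm; rewrite ler_norml => /andP[lo hi].
by rewrite ltr_norml; apply/andP; split; nra.
Qed.

Section SymmetricMatrices.
Variable R : pzRingType.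

(* Diagonal entries s_0, s_1, s_2; s_3, s_4, s_5 at positions {0,1}, {0,2}, {1,2}. *)
Definition symmx (s : 'rV[R]_6) : 'M[R]_3 :=
  \matrix_(i < 3, j < 3) s 0 (inord (if i == j then val i else i + j + 2)%N).

Lemma symmx_sym s : (symmx s)^T = symmx s.
Proof.
by apply/matrixP => i j; rewrite !mxE eq_sym; case: eqP => [->|_]; rewrite // (addnC j).
Qed.

Fact symmx_is_linear : linear symmx.
Proof. by move=> c s1 s2; apply/matrixP => i j; rewrite !mxE. Qed.

HB.instance Definition _ :=
  GRing.isLinear.Build R 'rV[R]_6 'M[R]_3 _ symmx symmx_is_linear.

Lemma symmx_eq0 s : (symmx s == 0) = (s == 0).
Proof.
apply/eqP/eqP => [s0|->]; last exact: linear0.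
have entry (i j : 'I_3) : s 0 (inord (if i == j then val i else i + j + 2)%N) = 0.
  by have := congr1 (fun M : 'M[R]_3 => M i j) s0; rewrite !mxE.
apply/rowP => -[k lt_k6]; rewrite mxE.
rewrite (_ : Ordinal lt_k6 = inord k); last by apply/val_inj; rewrite /= inordK.
case: k lt_k6 => [|[|[|[|[|[|//]]]]]] _.
- exact: (entry 0 0).
- exact: (entry 1 1).
- exact: (entry 2 2).
- exact: (entry 0 1).
- exact: (entry 0 2).
- exact: (entry 1 2).
Qed.

End SymmetricMatrices.

Section StackedColumns.
Variable R : realType.

Fact vecW_is_linear : linear (@vecW R).
Proof. by move=> c X Y; rewrite /vecW !linearP /= !(scale_col_mx, add_col_mx). Qed.

HB.instance Definition _ :=
  GRing.isLinear.Build R 'M[R]_3 'cV[R]_(3 + 3 + 3) _ (@vecW R) vecW_is_linear.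

Lemma exists_sym_kernel r (A : 'M[R]_(r, 3 + 3 + 3)) (W : 'M[R]_3) :
  (\rank A < 6)%N -> exists2 S : 'M[R]_3, S^T = S /\ S != 0 & A *m vecW (W *m S) = 0.
Proof.
move=> rkA; pose f := trmx \o @vecW R \o mulmx W \o @symmx R.
pose M := lin1_mx f *m A^T.
have rkM : (\rank M < 6)%N by rewrite (leq_ltn_trans (mxrankM_maxr _ _)) // mxrank_tr.
have /rowV0Pn[s /sub_kermxP sM s_neq0] : kermx M != 0.
  by rewrite kermx_eq0 /row_free ltn_eqF.
exists (symmx s); first by rewrite symmx_sym symmx_eq0.
by apply: trmx_inj; rewrite trmx_mul trmx0 -sM mulmxA mul_rV_lin1.
Qed.

End StackedColumns.

Theorem lemma4p1 (R : realType) (n : nat) (a : 'I_n -> 'rV[R]_3) (b : 'I_n -> R)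
  (hb : forall i, 0 < b i)
  (hdim : aff_dim_ge (Hpolyhedron a b) 3)
  (hbdd : bounded3 (Hpolyhedron a b))
  (hsym : centrally_symmetric (Hpolyhedron a b))
  (hfacet : forall i, is_facet a b i)
  (idx : 'I_6 -> 'I_n)
  (hrank : (\rank (Amat a idx) < 6)%N) :
  ~ exists W : 'M[R]_3,
      local_min_on (inS a b idx) (fun W' => `|\det W'|) W /\ 0 < `|\det W|.
Proof.
case=> W [[W_S [eps [eps_gt0 W_min]]] detW_gt0].
have [S [symS S_neq0] AS0] := exists_sym_kernel W hrank.
have [e e_gt0 small] := exists_entrywise_small (W *m S) eps_gt0.
have min_line c : `|c| < e -> `|\det W| <= `|\det (W + c *: (W *m S))|.
  move=> c_small; apply: W_min => [|i j].
    by rewrite /inS linearD linearZ /= mulmxDr -scalemxAr AS0 scaler0 addr0.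
  by rewrite mxE addrAC subrr add0r mxE; exact: small.
pose M := S *m S.
have [t /andP[t_gt0 t_lt_e] dip] := exists_even_sextic_lt1
  (((\tr M) ^+ 2 - \tr (M *m M)) / 2) (\det M) (mxtrace_sqr_sym_gt0 symS S_neq0) e_gt0.
have t_small : `|t| < e by rewrite gtr0_norm.
have mt_small : `|- t| < e by rewrite normrN.
have := ler_pM (normr_ge0 _) (normr_ge0 _) (min_line t t_small) (min_line _ mt_small).
rewrite -expr2 -normrM scaleNr det_addZ_mul_det_subZ det_1_subZ_mx33 normrM normrX.
by rewrite ler_pMr ?exprn_gt0 // -!exprM leNgt dip.
Qed.
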